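(* Let $f:(R,\mathfrak{m})\to(S,\mathfrak{n})$ and $g:(S,\mathfrak{n})\to(R,\mathfrak{m})$ be homomorphisms of finite length of Noetherian local rings. Then $g\circ f$ and $f\circ g$ are self-maps of finite length of $R$ and $S$ respectively, and $h_{\mathrm{alg}}(g\circ f,R)=h_{\mathrm{alg}}(f\circ g,S)$.
   Context: A homomorphism $u:(A,\mathfrak{a})\to(B,\mathfrak{b})$ of Noetherian local rings is of finite length if it is local and $u(\mathfrak{a})B$ is $\mathfrak{b}$-primary; its length is $\lambda(u):=\ell_B(B/u(\mathfrak{a})B)$. For a self-map of finite length $\psi$ of a Noetherian local ring $A$, the algebraic entropy is $h_{\mathrm{alg}}(\psi,A):=\lim_{n\to\infty}\frac1n\log\lambda(\psi^n)$ (the limit exists). *)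

From Stdlib Require Import Reals ClassicalEpsilon.
From HB Require Import structures.
From mathcomp Require Import all_boot all_order all_algebra.
Set Implicit Arguments. Unset Strict Implicit. Unset Printing Implicit Defensive.
Import GRing.Theory.
Local Open Scope ring_scope.

Definition is_ideal (A : comNzRingType) (I : A -> Prop) : Prop :=
  I 0 /\ (forall x y, I x -> I y -> I (x + y)) /\ (forall r x, I x -> I (r * x)).

Definition ideal_eq (A : Type) (I J : A -> Prop) : Prop := forall x, I x <-> J x.
Definition ideal_sub (A : Type) (I J : A -> Prop) : Prop := forall x, I x -> J x.

Definition proper_ideal (A : comNzRingType) (I : A -> Prop) : Prop :=
  is_ideal I /\ ~ I 1.

Definition is_max_ideal (A : comNzRingType) (m : A -> Prop) : Prop :=
  proper_ideal m /\
  forall J, is_ideal J -> ideal_sub m J -> ideal_eq J m \/ J 1.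

Definition noetherian (A : comNzRingType) : Prop :=
  forall I : nat -> A -> Prop,
    (forall n, is_ideal (I n)) -> (forall n, ideal_sub (I n) (I n.+1)) ->
    exists N, forall n, (N <= n)%N -> ideal_eq (I n) (I N).

Definition local_ring (A : comNzRingType) (m : A -> Prop) : Prop :=
  is_max_ideal m /\ forall J, is_max_ideal J -> ideal_eq J m.

Definition noetherian_local (A : comNzRingType) (m : A -> Prop) : Prop :=
  noetherian A /\ local_ring m.

Definition ext_ideal (A B : comNzRingType) (u : A -> B) (a : A -> Prop) : B -> Prop :=
  fun y => forall J, is_ideal J -> (forall x, a x -> J (u x)) -> J y.

Definition radical (B : comNzRingType) (I : B -> Prop) : B -> Prop :=
  fun y => exists k : nat, I (y ^+ k).

Definition primary_to (B : comNzRingType) (I b : B -> Prop) : Prop :=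
  proper_ideal I /\
  (forall x y, I (x * y) -> I x \/ radical I y) /\
  ideal_eq (radical I) b.

Definition local_map (A B : comNzRingType) (u : A -> B) (a : A -> Prop) (b : B -> Prop) :=
  forall x, a x -> b (u x).

(* Homomorphism of finite length (u is a ring morphism by its type / by
   construction as a composite of ring morphisms). *)
Definition finite_length_map (A B : comNzRingType) (u : A -> B)
  (a : A -> Prop) (b : B -> Prop) : Prop :=
  local_map u a b /\ primary_to (ext_ideal u a) b.

(* Strict chain of length k of submodules of B/I, i.e. of ideals containing I:
   J 0 c J 1 c ... c J k, all ideals containing I, strict inclusions. *)
Definition has_chain (B : comNzRingType) (I : B -> Prop) (k : nat) : Prop :=
  exists J : nat -> B -> Prop,
    (forall i, (i <= k)%N -> is_ideal (J i) /\ ideal_sub I (J i)) /\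
    (forall i, (i < k)%N -> ideal_sub (J i) (J i.+1) /\ ~ ideal_sub (J i.+1) (J i)).

(* Length l_B(B/I): the supremum of lengths of such chains (0 if unbounded,
   which never happens in the situations considered). *)
Definition colength (B : comNzRingType) (I : B -> Prop) : nat :=
  epsilon (inhabits 0%N)
    (fun n => has_chain I n /\ forall k, has_chain I k -> (k <= n)%N).

Definition map_length (A B : comNzRingType) (u : A -> B) (a : A -> Prop) : nat :=
  colength (ext_ideal u a).

(* Sequence (1/n) log lambda(psi^n), indexed from n = 1. *)
Definition entropy_seq (A : comNzRingType) (psi : A -> A) (a : A -> Prop) : nat -> R :=
  fun n => Rdiv (ln (INR (map_length (iter n.+1 psi) a))) (INR n.+1).

Definition has_alg_entropy (A : comNzRingType) (psi : A -> A) (a : A -> Prop) (h : R) : Prop :=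
  Un_cv (entropy_seq psi a) h.

From Pilot Require Import Defs.
From Stdlib Require Import Reals Lra Lia Classical ClassicalEpsilon FunctionalExtensionality.
From mathcomp Require Import all_boot all_order all_algebra.
From mathcomp Require Import zify.
Set Implicit Arguments. Unset Strict Implicit. Unset Printing Implicit Defensive.
Import GRing.Theory.
Local Open Scope ring_scope.

(* Write λ(u) = ℓ(B/u(a)B).  Two
   estimates carry the proof:
   - finiteness: if I ⊆ n ⊆ rad I in a Noetherian local ring (B, n), then B/I
     has finite length (induction on generators x of n, filtering by I + Bx^j);
   - multiplicativity: for a ring map v out of (B, n) and an ideal I of B,
     ℓ(C/v(I)C) ≤ ℓ(B/I)·ℓ(C/v(n)C) (peel off socle elements of B/I).
   The latter gives λ(ψ^(p+q)) ≤ λ(ψ^p)·λ(ψ^q) for ψ = g∘f and ψ = f∘g, and,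
   since (g∘f)^(k+1) = g∘(f∘g)^k∘f, the cross bound
   λ((g∘f)^(k+1)) ≤ λ(f)λ(g)·λ((f∘g)^k), and symmetrically.  After taking
   logarithms, Fekete's lemma gives the limits of (1/k) log λ, and the cross
   bounds force the two limits to agree.  That g∘f has finite length is direct:
   (g∘f)(m)R ⊆ m, and m ⊆ rad(g(n)R) ⊆ rad((g∘f)(m)R). *)

Section IdealBasics.
Variable B : comNzRingType.
Implicit Types (I J : B -> Prop) (x y r : B).

Lemma ideal0 I : is_ideal I -> I 0.
Proof. by case. Qed.

Lemma idealD I x y : is_ideal I -> I x -> I y -> I (x + y).
Proof. by case=> _ [HD _]; apply: HD. Qed.

Lemma idealMl I r x : is_ideal I -> I x -> I (r * x).
Proof. by case=> _ [_ HM]; apply: HM. Qed.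

Lemma idealMr I r x : is_ideal I -> I x -> I (x * r).
Proof. by move=> HI Hx; rewrite mulrC; apply: idealMl. Qed.

Lemma idealN I x : is_ideal I -> I x -> I (- x).
Proof. by move=> HI Hx; rewrite -mulN1r; apply: idealMl. Qed.

Lemma idealB I x y : is_ideal I -> I x -> I y -> I (x - y).
Proof. by move=> HI Hx Hy; apply: idealD => //; apply: idealN. Qed.

Lemma ideal_unit I x : is_ideal I -> I 1 -> I x.
Proof. by move=> HI H1; rewrite -(mulr1 x); apply: idealMl. Qed.

Lemma idealX_ge I x a c : is_ideal I -> I (x ^+ a) -> (a <= c)%N -> I (x ^+ c).
Proof. by move=> HI Ha Hac; rewrite -(subnK Hac) exprD; apply: idealMl. Qed.

Definition whole : B -> Prop := fun _ => True.
Definition zero_ideal : B -> Prop := fun y => y = 0.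
Definition ideal_cap I J : B -> Prop := fun y => I y /\ J y.
Definition ideal_add I J : B -> Prop := fun y => exists i j, I i /\ J j /\ y = i + j.
Definition adjoin I x : B -> Prop := fun y => exists i r, I i /\ y = i + r * x.

Lemma whole_ideal : is_ideal whole.
Proof. by []. Qed.

Lemma zero_ideal_ideal : is_ideal zero_ideal.
Proof.
split=> //; split; first by move=> x y -> ->; rewrite addr0.
by move=> r x ->; rewrite mulr0.
Qed.

Lemma ideal_cap_ideal I J : is_ideal I -> is_ideal J -> is_ideal (ideal_cap I J).
Proof.
move=> HI HJ; split; first by split; apply: ideal0.
split; first by move=> x y [? ?] [? ?]; split; apply: idealD.
by move=> r x [? ?]; split; apply: idealMl.
Qed.

Lemma ideal_add_ideal I J : is_ideal I -> is_ideal J -> is_ideal (ideal_add I J).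
Proof.
move=> HI HJ; split.
  by exists 0, 0; rewrite addr0; split; [exact: ideal0 | split; [exact: ideal0 |]].
split.
  move=> _ _ [i [j [Hi [Hj ->]]]] [i' [j' [Hi' [Hj' ->]]]].
  by exists (i + i'), (j + j'); split; [|split]; [apply: idealD..| rewrite addrACA].
move=> r _ [i [j [Hi [Hj ->]]]].
by exists (r * i), (r * j); split; [|split]; [apply: idealMl..| rewrite mulrDr].
Qed.

Lemma adjoin_ideal I x : is_ideal I -> is_ideal (adjoin I x).
Proof.
move=> HI; split; first by exists 0, 0; rewrite mul0r addr0; split; first exact: ideal0.
split.
  move=> _ _ [i [r [Hi ->]]] [i' [r' [Hi' ->]]].
  by exists (i + i'), (r + r'); split; [apply: idealD | rewrite mulrDl addrACA].
move=> s _ [i [r [Hi ->]]].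
by exists (s * i), (s * r); split; [apply: idealMl | rewrite mulrDr mulrA].
Qed.

Lemma adjoin_sub I x : ideal_sub I (adjoin I x).
Proof. by move=> y Hy; exists y, 0; rewrite mul0r addr0. Qed.

Lemma adjoin_mem I x : is_ideal I -> adjoin I x x.
Proof. by move=> HI; exists 0, 1; rewrite mul1r add0r; split; first exact: ideal0. Qed.

Lemma adjoin_min I J x :
  is_ideal J -> ideal_sub I J -> J x -> ideal_sub (adjoin I x) J.
Proof.
by move=> HJ HIJ Hx _ [i [r [Hi ->]]]; apply: idealD => //; [apply: HIJ | apply: idealMl].
Qed.

End IdealBasics.
Arguments whole {B}.
Arguments zero_ideal {B}.

(* For ideals X ⊆ Y, [length_le X Y c] says that
   ℓ(Y/X) ≤ c: any increasing chain of ideals between X and Y has at most c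
   strict steps.  Counting strict steps of non-strict chains (rather than
   bounding strict chains) is what makes the modular-law argument below work. *)
Section ChainLength.
Variable B : comNzRingType.
Implicit Types (I J X Y Z K : B -> Prop) (L P Q : nat -> B -> Prop).

Definition weak_chain X Y L (k : nat) : Prop :=
  (forall i, (i <= k)%N -> is_ideal (L i) /\ ideal_sub X (L i) /\ ideal_sub (L i) Y) /\
  (forall i, (i < k)%N -> ideal_sub (L i) (L i.+1)).

Definition strict_step L (i : nat) : Prop := ~ ideal_sub (L i.+1) (L i).

Definition indicator (P : Prop) : nat :=
  if excluded_middle_informative P then 1%N else 0%N.

Fixpoint strict_steps L (k : nat) : nat :=
  if k is k'.+1 then (strict_steps L k' + indicator (strict_step L k'))%N else 0%N.

Definition length_le X Y (c : nat) : Prop :=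
  forall L k, weak_chain X Y L k -> (strict_steps L k <= c)%N.

Lemma indicator_true (P : Prop) : P -> indicator P = 1%N.
Proof. by rewrite /indicator; case: excluded_middle_informative. Qed.

Lemma indicator_false (P : Prop) : ~ P -> indicator P = 0%N.
Proof. by rewrite /indicator; case: excluded_middle_informative. Qed.

Lemma indicator_le (P Q : Prop) : (P -> Q) -> (indicator P <= indicator Q)%N.
Proof.
rewrite /indicator => PQ.
case: excluded_middle_informative => // HP.
by case: excluded_middle_informative => // - []; apply: PQ.
Qed.

Lemma indicator_le1 (P : Prop) : (indicator P <= 1)%N.
Proof. by rewrite /indicator; case: excluded_middle_informative. Qed.

Lemma strict_steps_ext L L' k :
  (forall i, (i <= k)%N -> L i = L' i) -> strict_steps L k = strict_steps L' k.
Proof.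
elim: k => [|k IH] E //=.
rewrite IH => [|i Hi]; last by apply: E; apply: leqW.
by rewrite /strict_step (E k (leqnSn k)) (E k.+1 (leqnn _)).
Qed.

Lemma strict_steps_mono L P k :
  (forall i, (i < k)%N -> strict_step L i -> strict_step P i) ->
  (strict_steps L k <= strict_steps P k)%N.
Proof.
elim: k => [|k IH] H //=; apply: leq_add.
  by apply: IH => i Hi; apply: H; apply: ltnW.
exact/indicator_le/H.
Qed.

Lemma strict_steps_split L P Q k :
  (forall i, (i < k)%N -> strict_step L i -> strict_step P i \/ strict_step Q i) ->
  (strict_steps L k <= strict_steps P k + strict_steps Q k)%N.
Proof.
elim: k => [|k IH] H //=.
have IHk := IH (fun i Hi => H i (ltnW Hi)).
have [HL|HL] := classic (strict_step L k); last first.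
  by rewrite indicator_false // addn0 (leq_trans IHk) // leq_add // leq_addr.
rewrite indicator_true //.
by case: (H k (ltnSn k) HL) => /indicator_true ->; move: IHk; lia.
Qed.

Lemma strict_steps_const X k : strict_steps (fun _ => X) k = 0%N.
Proof. by elim: k => //= k ->; rewrite indicator_false // => /(_ _)[]. Qed.

Lemma strict_steps_all L k :
  (forall i, (i < k)%N -> strict_step L i) -> strict_steps L k = k.
Proof.
elim: k => //= k IH H; rewrite IH => [|i Hi]; last exact/H/ltnW.
by rewrite indicator_true ?addn1 //; apply: H.
Qed.

Lemma strict_steps_cons X L k :
  strict_steps (fun i => if i is i'.+1 then L i' else X) k.+1 =
  (indicator (~ ideal_sub (L 0%N) X) + strict_steps L k)%N.
Proof. by elim: k => [|k /= ->]; rewrite /= ?addn0 ?addnA. Qed.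

Lemma length_le_mono X X' Y Y' c c' :
  ideal_sub X X' -> ideal_sub Y' Y -> (c <= c')%N ->
  length_le X Y c -> length_le X' Y' c'.
Proof.
move=> HX HY Hc H L k [H1 H2]; apply: leq_trans Hc; apply: H; split => // i Hi.
by have [? [? ?]] := H1 i Hi; split => //; split => x Hx; auto.
Qed.

Lemma length_le_unit X Y c : X 1 -> length_le X Y c.
Proof.
move=> H1 L k [HL _]; apply: (@leq_trans 0); last exact: leq0n.
rewrite -(strict_steps_const X k).
apply: strict_steps_mono => i Hi Hs; exfalso; apply: Hs => z _.
by have [HLi [HXL _]] := HL i (ltnW Hi); apply: ideal_unit (HXL _ H1).
Qed.

Lemma length_le_strict X Y :
  is_ideal X -> is_ideal Y -> ideal_sub X Y -> ~ ideal_sub Y X -> ~ length_le X Y 0.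
Proof.
move=> HX HY HXY HYX Hb.
have Hw : weak_chain X Y (fun i => if i is 0%N then X else Y) 1%N.
  by split=> [[|i] _|[]] //; split => //; split => // x Hx; auto.
by have := Hb _ _ Hw; rewrite /= indicator_true.
Qed.

Lemma strict_cap_or_add I J Y :
  is_ideal I -> is_ideal J -> is_ideal Y -> ideal_sub I J -> ~ ideal_sub J I ->
  ~ ideal_sub (ideal_cap J Y) (ideal_cap I Y) \/ ~ ideal_sub (ideal_add J Y) (ideal_add I Y).
Proof.
move=> HI HJ HY HIJ Hn; apply: NNPP => Hc; apply: Hn => z Hz.
have Hcap : ideal_sub (ideal_cap J Y) (ideal_cap I Y) by apply: NNPP => h; apply: Hc; left.
have Hadd : ideal_sub (ideal_add J Y) (ideal_add I Y) by apply: NNPP => h; apply: Hc; right.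
have [i [y [Hi [Hy Ez]]]] : ideal_add I Y z.
  by apply: Hadd; exists z, 0; rewrite addr0; split => //; split => //; apply: ideal0.
have Ey : y = z - i by rewrite Ez addrC addKr.
have [Iy _] : ideal_cap I Y y.
  by apply: Hcap; split; rewrite // Ey; apply: idealB => //; apply: HIJ.
by rewrite Ez; apply: idealD.
Qed.

Lemma length_le_add X Y Z a b :
  is_ideal Y -> is_ideal Z -> ideal_sub X Y -> ideal_sub Y Z ->
  length_le X Y a -> length_le Y Z b -> length_le X Z (a + b).
Proof.
move=> HY HZ HXY HYZ Ha Hb L k [H1 H2].
apply: leq_trans (strict_steps_split (P := fun i => ideal_cap (L i) Y)
                                     (Q := fun i => ideal_add (L i) Y) _) _.
  move=> i Hi Hs; have [HLi _] := H1 i (ltnW Hi); have [HLi' _] := H1 i.+1 Hi.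
  exact: strict_cap_or_add HLi HLi' HY (H2 i Hi) Hs.
apply: leq_add; [apply: Ha | apply: Hb]; split.
- move=> i Hi; have [HLi [HXL HLZ]] := H1 i Hi; split; first exact: ideal_cap_ideal.
  by split => x; [move=> Hx; split; auto | case].
- by move=> i Hi x [Hx Hy]; split => //; apply: H2.
- move=> i Hi; have [HLi [HXL HLZ]] := H1 i Hi; split; first exact: ideal_add_ideal.
  split; last by move=> _ [l [y [Hl [Hy ->]]]]; apply: idealD => //; auto.
  by move=> x Hx; exists 0, x; rewrite add0r; split => //; apply: ideal0.
- by move=> i Hi _ [l [y [Hl [Hy ->]]]]; exists l, y; split => //; apply: H2.
Qed.

(* Cyclic quotients: if K·y ⊆ X then (X + By)/X is a quotient of B/K, so
   ℓ((X + By)/X) ≤ ℓ(B/K). *)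
Lemma length_le_adjoin X K y c :
  is_ideal X -> (forall r, K r -> X (r * y)) -> length_le K whole c ->
  length_le X (adjoin X y) c.
Proof.
move=> HX HK Hb L k [H1 H2].
apply: leq_trans (strict_steps_mono (P := fun i r => L i (r * y)) _) _.
  move=> i Hi Hs Hsub; apply: Hs => z Hz.
  have [HLi [HXLi _]] := H1 i (ltnW Hi).
  have [HLi' [HXLi' HLiY']] := H1 i.+1 Hi.
  have [x [r [Hx Ez]]] := HLiY' z Hz.
  have Hry : L i (r * y).
    apply: Hsub; have -> : r * y = z - x by rewrite Ez addrC addKr.
    by apply: idealB => //; apply: HXLi'.
  by rewrite Ez; apply: idealD => //; apply: HXLi.
apply: Hb; split=> [i Hi|i Hi r]; last exact: H2.
have [HLi [HXLi _]] := H1 i Hi; split; last by split => // r Hr; apply/HXLi/HK.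
split; first by rewrite mul0r; apply: ideal0.
split; first by move=> r s Hr Hs; rewrite mulrDl; apply: idealD.
by move=> s r Hr; rewrite -mulrA; apply: idealMl.
Qed.

(* If X ⊊ X' then ℓ(Y/X') < ℓ(Y/X): prepend X to any chain starting above X'. *)
Lemma length_le_shrink_bottom X X' Y c :
  is_ideal X -> ideal_sub X X' -> ~ ideal_sub X' X ->
  length_le X Y c.+1 -> length_le X' Y c.
Proof.
move=> HX HXX' Hn Hb L k [H1 H2].
have [_ [HX'L0 HL0Y]] := H1 0%N erefl.
have := Hb (fun i => if i is i'.+1 then L i' else X) k.+1.
rewrite strict_steps_cons indicator_true => [|HL0X]; last first.
  by apply: Hn => x Hx; apply/HL0X/HX'L0.
rewrite add1n ltnS; apply; split=> [[|i] Hi|[|i] Hi] /=.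
- by split => //; split => // x Hx; auto.
- by have [? [? ?]] := H1 i Hi; split => //; split => // x Hx; auto.
- by move=> x Hx; auto.
- exact: H2.
Qed.

(* If Y ⊊ Y' then ℓ(Y/X) < ℓ(Y'/X): append Y' to any chain ending below Y. *)
Lemma length_le_shrink_top X Y Y' c :
  is_ideal Y' -> ideal_sub Y Y' -> ~ ideal_sub Y' Y -> ideal_sub X Y ->
  length_le X Y' c.+1 -> length_le X Y c.
Proof.
move=> HY' HYY' Hn HXY Hb L k [H1 H2].
pose L' i := if (i <= k)%N then L i else Y'.
have := Hb L' k.+1; rewrite /= (@strict_steps_ext L' L) => [|i Hi]; last by rewrite /L' Hi.
have [_ [_ HLkY]] := H1 k (leqnn k).
rewrite indicator_true => [|Hs]; last first.
  by apply: Hn => x Hx; apply: HLkY; move: Hs; rewrite /L' ltnn leqnn; apply.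
rewrite addn1 ltnS; apply; split=> i Hi; rewrite /L'.
  case: leqP => Hik; last by split => //; split => // x Hx; auto.
  by have [? [? ?]] := H1 i Hik; split => //; split => // x Hx; auto.
rewrite ltnS in Hi; rewrite Hi; case: (leqP i.+1 k) => Hik; first exact: H2.
by move=> x Hx; have [_ [_ HLiY]] := H1 i Hi; auto.
Qed.

End ChainLength.

Section Colength.
Variable B : comNzRingType.
Implicit Types (X : B -> Prop) (L J : nat -> B -> Prop).

Definition strict_chain X J (s : nat) : Prop :=
  (forall i, (i <= s)%N -> is_ideal (J i) /\ ideal_sub X (J i)) /\
  (forall i, (i < s)%N -> ideal_sub (J i) (J i.+1) /\ ~ ideal_sub (J i.+1) (J i)).

Lemma has_chain_le X c k : length_le X whole c -> has_chain X k -> (k <= c)%N.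
Proof.
move=> Hb [J [H1 H2]].
rewrite -(@strict_steps_all _ J k) => [|i /H2[]//]; apply: Hb; split.
  by move=> i /H1[? ?].
by move=> i /H2[].
Qed.

Lemma strict_subchain X L k : weak_chain X whole L k ->
  exists J, strict_chain X J (strict_steps L k) /\ ideal_eq (J (strict_steps L k)) (L k).
Proof.
elim: k => [|k IH] [H1 H2].
  by exists (fun _ => L 0%N); have [? [? _]] := H1 0%N erefl; split => //; split => // [[]].
have [|J [[HJ1 HJ2] HJtop]] := IH.
  by split => i Hi; [apply/H1/leqW | apply/H2/ltnW].
have Hk := H2 k (ltnSn k); have [HLk1 [HXk1 _]] := H1 k.+1 (leqnn _).
rewrite /=; set s := strict_steps L k in HJ1 HJ2 HJtop *.
have [Hs|Hs] := classic (strict_step L k); last first.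
  rewrite indicator_false // addn0; exists J; split => // x.
  by split => [/HJtop/Hk|Hx]; last by apply/HJtop/(NNPP _ Hs).
rewrite indicator_true // addn1.
exists (fun i => if (i <= s)%N then J i else L k.+1); split; last by rewrite ltnn.
split=> i Hi; first by case: leqP => Hik; [apply: HJ1 | split].
rewrite ltnS in Hi; rewrite Hi; case: (ltnP i s) => Hi1; first exact: HJ2.
have -> : i = s by apply/eqP; rewrite eqn_leq Hi Hi1.
split; first by move=> x /HJtop/Hk.
by move=> Hsub; apply: Hs => x /Hsub/HJtop.
Qed.

Lemma greatest_nat (P : nat -> Prop) c :
  P 0%N -> (forall k, P k -> (k <= c)%N) -> exists n, P n /\ forall k, P k -> (k <= n)%N.
Proof.
elim: c => [|c IH] H0 Hb; first by exists 0%N; split => // k /Hb.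
have [Hc|Hc] := classic (P c.+1); first by exists c.+1.
apply: IH => // k Hk; move: (Hb k Hk); rewrite leq_eqVlt ltnS => /orP[/eqP Ek|//].
by rewrite Ek in Hk.
Qed.

Lemma colength_spec X c : is_ideal X -> length_le X whole c ->
  has_chain X (colength X) /\ forall k, has_chain X k -> (k <= colength X)%N.
Proof.
move=> HX Hb; apply: (epsilon_spec (inhabits 0%N)
  (fun n => has_chain X n /\ forall k, has_chain X k -> (k <= n)%N)).
apply: (@greatest_nat _ c) => [|k]; last exact: has_chain_le.
by exists (fun _ => X); split => // i _; split.
Qed.

Lemma colength_bound X c : is_ideal X -> length_le X whole c ->
  length_le X whole (colength X).
Proof.
move=> HX Hb L k HL; have [_ Hmax] := colength_spec HX Hb; apply: Hmax.
by have [J [HJ _]] := strict_subchain HL; exists J.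
Qed.

Lemma colength_le X c : is_ideal X -> length_le X whole c -> (colength X <= c)%N.
Proof. by move=> HX Hb; have [Hc _] := colength_spec HX Hb; apply: has_chain_le Hb Hc. Qed.

Lemma colength_pos X c : is_ideal X -> ~ X 1 -> length_le X whole c ->
  (0 < colength X)%N.
Proof.
move=> HX H1 Hb; have [_ Hmax] := colength_spec HX Hb; apply: Hmax.
exists (fun i => if i is 0%N then X else whole).
split=> [[|i] _|[|//] _]; first by split.
  by split; [exact: whole_ideal|].
by split => // Hsub; apply/H1/Hsub.
Qed.

End Colength.

Section LocalRings.
Variable B : comNzRingType.
Implicit Types (I J M : B -> Prop) (x y : B).

Lemma noetherian_maximal (Q : (B -> Prop) -> Prop) I :
  noetherian B -> (forall J, Q J -> is_ideal J) -> Q I ->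
  exists M, Q M /\ forall J, Q J -> ideal_sub M J -> ideal_sub J M.
Proof.
move=> HN HQ QI; apply: NNPP => Hno.
have grow J : Q J -> exists J', Q J' /\ ideal_sub J J' /\ ~ ideal_sub J' J.
  move=> QJ; apply: NNPP => Hnot; apply: Hno; exists J; split => // J' QJ' HJJ'.
  by apply: NNPP => HJ'J; apply: Hnot; exists J'.
pose above J J' := Q J' /\ ideal_sub J J' /\ ~ ideal_sub J' J.
pose next J := epsilon (inhabits I) (above J).
have next_spec J : Q J -> above J (next J).
  by move=> QJ; apply: (epsilon_spec (inhabits I) (above J)); apply: grow.
pose K k := iter k next I.
have QK k : Q (K k) by elim: k => //= k /next_spec[].
have [N HN'] := HN K (fun k => HQ _ (QK k)) (fun k => proj1 (proj2 (next_spec _ (QK k)))).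
have [_ [_ Hstrict]] := next_spec _ (QK N).
by apply: Hstrict => x /(HN' N.+1 (leqnSn N) x).
Qed.

Lemma max_ideal_exists I : noetherian B -> Defs.proper_ideal I ->
  exists M, is_max_ideal M /\ ideal_sub I M.
Proof.
move=> HN HI.
pose Q J := Defs.proper_ideal J /\ ideal_sub I J.
have QI J : Q J -> is_ideal J by case=> [[]].
have [M [[HM HIM] Mmax]] := noetherian_maximal HN QI (conj HI (fun x Hx => Hx)).
exists M; split => //; split => // J HJ HMJ.
have [J1|J1] := classic (J 1); [by right | left => x].
by split => [/(Mmax J)|/HMJ]; apply=> //; split => // y /HIM/HMJ.
Qed.

Variable n : B -> Prop.
Hypothesis Hloc : noetherian_local n.

Lemma local_ideal : is_ideal n.
Proof. by case: Hloc => _ [[[]]]. Qed.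

Lemma local_proper : ~ n 1.
Proof. by case: Hloc => _ [[[]]]. Qed.

Lemma local_max : is_max_ideal n.
Proof. by case: Hloc => _ []. Qed.

Lemma local_unit y : ~ n y -> exists z, z * y = 1.
Proof.
move=> Hy; pose P := adjoin zero_ideal y.
have HP : is_ideal P by apply/adjoin_ideal/zero_ideal_ideal.
have [[i [z [-> E1]]]|P1] := classic (P 1); first by exists z; rewrite E1 add0r.
have [M [HM HPM]] := max_ideal_exists (proj1 Hloc) (conj HP P1).
have [_ [_ Hunique]] := Hloc.
by case: Hy; apply/(Hunique M HM)/HPM/adjoin_mem/zero_ideal_ideal.
Qed.

Lemma local_pow y k : n (y ^+ k) -> n y.
Proof.
move=> Hk; apply: NNPP => /local_unit[z Hz]; apply: local_proper.
by rewrite -(expr1n _ k) -Hz exprMn; apply: idealMl => //; apply: local_ideal.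
Qed.

Fixpoint adjoin_seq I (xs : seq B) : B -> Prop :=
  if xs is x :: r then adjoin_seq (adjoin I x) r else I.

Lemma adjoin_seq_ideal I xs : is_ideal I -> is_ideal (adjoin_seq I xs).
Proof. by elim: xs I => [|x xs IH] I HI //=; apply/IH/adjoin_ideal. Qed.

Lemma adjoin_seq_sub I xs : ideal_sub I (adjoin_seq I xs).
Proof. by elim: xs I => [|x xs IH] I y Hy //=; apply/IH/adjoin_sub. Qed.

Lemma adjoin_seq_mono I J xs :
  ideal_sub I J -> ideal_sub (adjoin_seq I xs) (adjoin_seq J xs).
Proof.
elim: xs I J => [|x xs IH] I J HIJ //=; apply: IH.
by move=> _ [i [r [Hi ->]]]; exists i, r; split => //; apply: HIJ.
Qed.

(* The maximal ideal is finitely generated: take a maximal finitely generated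
   ideal inside n; it cannot miss any y ∈ n. *)
Lemma local_fg : exists xs, (forall x, x \in xs -> n x) /\
  ideal_sub n (adjoin_seq zero_ideal xs).
Proof.
pose Q J := exists xs, (forall x, x \in xs -> n x) /\ J = adjoin_seq zero_ideal xs.
have QI : forall J, Q J -> is_ideal J.
  by move=> _ [xs [_ ->]]; apply/adjoin_seq_ideal/zero_ideal_ideal.
have Q0 : Q zero_ideal by exists [::].
have [_ [[xs [Hxs ->]] Mmax]] := noetherian_maximal (proj1 Hloc) QI Q0.
exists xs; split => // y Hy; apply: (Mmax (adjoin_seq zero_ideal (y :: xs))) => /=.
- by exists (y :: xs); split => // x; rewrite in_cons => /orP[/eqP ->|/Hxs].
- by apply: adjoin_seq_mono; apply: adjoin_sub.
- by apply/adjoin_seq_sub/adjoin_mem/zero_ideal_ideal.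
Qed.

Lemma length_le_residue I : ideal_sub n I -> length_le I whole 1.
Proof.
have [_ Hmax] := local_max => HnI L k [H1 H2].
suff : (strict_steps L k <= indicator (L k 1%R))%N.
  by move/leq_trans; apply; apply: indicator_le1.
elim: k H1 H2 => [|k IH] H1 H2 //=.
have IHk := IH (fun i Hi => H1 i (leqW Hi)) (fun i Hi => H2 i (ltnW Hi)).
have [HLk [HILk _]] := H1 k (leqW (leqnn k)).
have [HLk1 [HILk1 _]] := H1 k.+1 (leqnn _).
have [Hs|Hs] := classic (strict_step L k); last first.
  by rewrite indicator_false // addn0 (leq_trans IHk) //; apply/indicator_le/H2.
have Lk1 : L k.+1 1.
  have [E|//] := Hmax _ HLk1 (fun x Hx => HILk1 _ (HnI _ Hx)).
  by case: Hs => x /E/HnI/HILk.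
have Lk0 : ~ L k 1 by move=> Lk; apply: Hs => x _; apply: ideal_unit Lk.
move: IHk; rewrite (indicator_true Hs) (indicator_true Lk1) (indicator_false Lk0).
by rewrite leqn0 => /eqP ->.
Qed.

(* Starting from x = 1, while some t ∈ n has t x ∉ I replace x by t x; as
   1 - r t is a unit for r ∈ B, I + B(t x) ⊊ I + Bx, so ℓ((I + Bx)/I) drops
   and the descent stops within c steps. *)
Lemma socle_element I c : is_ideal I -> ~ I 1 -> length_le I whole c ->
  exists x, ~ I x /\ forall t, n t -> I (t * x).
Proof.
move=> HI I1 Hb.
suff descend d x : ~ I x -> length_le I (adjoin I x) d ->
    exists x, ~ I x /\ forall t, n t -> I (t * x).
  by apply: (descend c 1) => //; apply: (length_le_mono _ _ _ Hb).
elim: d x => [|d IH] x Ix Hbx.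
  case: (length_le_strict HI (adjoin_ideal x HI) (adjoin_sub x) _ Hbx).
  by move=> Hsub; apply/Ix/Hsub/adjoin_mem.
have [Hsoc|Hsoc] := classic (forall t, n t -> I (t * x)); first by exists x.
have [t [Ht Itx]] : exists t, n t /\ ~ I (t * x).
  by apply: NNPP => Hno; apply: Hsoc => t Ht; apply: NNPP => Itx; apply: Hno; exists t.
apply: (IH (t * x)) => //.
apply: (length_le_shrink_top (Y' := adjoin I x)) => //.
- exact: adjoin_ideal.
- apply: adjoin_min; [exact: adjoin_ideal | exact: adjoin_sub |].
  by exists 0, t; split; [apply: ideal0 | rewrite add0r].
- move=> /(_ x (adjoin_mem x HI))[i [r [Hi Ex]]].
  have Hu : ~ n (1 - r * t).
    move=> H; apply: local_proper; rewrite -(subrK (r * t) 1).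
    by have Hn := local_ideal; apply: idealD => //; apply: idealMl.
  have [z Hz] := local_unit Hu.
  have Ei : i = (1 - r * t) * x by rewrite mulrBl mul1r {1}Ex -mulrA addrK.
  by apply: Ix; rewrite -[x]mul1r -Hz -mulrA -Ei; apply: idealMl.
- exact: adjoin_sub.
Qed.

End LocalRings.

(* Finite length: if I ⊆ n and every element of n is nilpotent modulo I, then
   B/I has finite length.  Induction on a generating list of n, using the
   filtration I ⊆ I + Bx^(e-1) ⊆ ... ⊆ I + Bx ⊆ B. *)
Section FiniteLength.
Variable B : comNzRingType.
Implicit Types (I : B -> Prop) (x : B).

(* ℓ(B/(I + Bx^j)) ≤ j · ℓ(B/(I + Bx)): each step (I + Bx^(j+1)) ⊆ (I + Bx^j)
   is a quotient of B/(I + Bx), being generated by x^j. *)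
Lemma length_le_adjoin_pow I x c j : is_ideal I ->
  length_le (adjoin I x) whole c -> length_le (adjoin I (x ^+ j)) whole (j * c).
Proof.
move=> HI Hc; elim: j => [|j IHj].
  by apply: length_le_unit; rewrite expr0; apply: adjoin_mem.
rewrite mulSn; apply: length_le_add IHj; first exact: adjoin_ideal.
- exact: whole_ideal.
- apply: adjoin_min; [exact: adjoin_ideal | exact: adjoin_sub |].
  by exists 0, x; split; [apply: ideal0 | rewrite add0r exprS].
- by [].
have Hstep :
    length_le (adjoin I (x ^+ j.+1)) (adjoin (adjoin I (x ^+ j.+1)) (x ^+ j)) c.
  apply: length_le_adjoin Hc; first exact: adjoin_ideal.
  move=> _ [i [s [Hi ->]]]; exists (i * x ^+ j), s; split; first exact: idealMr.
  by rewrite mulrDl -mulrA -exprS.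
apply: (length_le_mono _ _ _ Hstep) => //.
by move=> _ [i [r [Hi ->]]]; exists i, r; split => //; apply: adjoin_sub.
Qed.

Lemma length_finite (n : B -> Prop) (xs : seq B) I :
  noetherian_local n -> (forall x, x \in xs -> n x) -> is_ideal I ->
  (forall t, n t -> exists e, I (t ^+ e)) -> ideal_sub n (adjoin_seq I xs) ->
  exists c, length_le I whole c.
Proof.
move=> Hl; elim: xs I => [|x xs IH] I /= Hxs HI Hnil Hgen.
  by exists 1%N; apply: length_le_residue Hgen.
have [c Hc] : exists c, length_le (adjoin I x) whole c.
  apply: IH => [y Hy||t /Hnil[e He]|] //; first by apply: Hxs; rewrite in_cons Hy orbT.
    exact: adjoin_ideal.
  by exists e; apply: adjoin_sub.
have [e He] := Hnil x (Hxs x (mem_head x xs)).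
exists (e * c)%N; have Hec := length_le_adjoin_pow (j := e) HI Hc.
by apply: (length_le_mono _ _ _ Hec) => //; apply: adjoin_min.
Qed.

End FiniteLength.

Section Extension.
Implicit Types A B C : comNzRingType.

Lemma ext_ideal_ideal A B (u : A -> B) (a : A -> Prop) : is_ideal (ext_ideal u a).
Proof.
split; first by move=> J HJ _; apply: ideal0.
split; first by move=> x y Hx Hy J HJ Ha; apply: idealD => //; [apply: Hx | apply: Hy].
by move=> r x Hx J HJ Ha; apply: idealMl => //; apply: Hx.
Qed.

Lemma ext_ideal_mem A B (u : A -> B) (a : A -> Prop) x : a x -> ext_ideal u a (u x).
Proof. by move=> Hx J HJ; apply. Qed.

Lemma ext_ideal_min A B (u : A -> B) (a : A -> Prop) (J : B -> Prop) :
  is_ideal J -> (forall x, a x -> J (u x)) -> ideal_sub (ext_ideal u a) J.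
Proof. by move=> HJ Ha y; apply. Qed.

Lemma ext_ideal_proper A B (m : A -> Prop) (n : B -> Prop) (u : A -> B) :
  noetherian_local n -> local_map u m n -> ~ ext_ideal u m 1.
Proof. by move=> Hn Hu /(ext_ideal_min (local_ideal Hn) Hu); apply: local_proper. Qed.

(* Ring homomorphisms as a property of plain functions, so that it is stable
   under composition and iteration. *)
Definition ring_map A B (u : A -> B) : Prop :=
  u 0 = 0 /\ u 1 = 1 /\ (forall x y, u (x + y) = u x + u y) /\
  (forall x y, u (x * y) = u x * u y).

Lemma rmorphism_ring_map A B (f : {rmorphism A -> B}) : ring_map f.
Proof.
by split; [apply: rmorph0 | split; [apply: rmorph1 | split; [apply: rmorphD | apply: rmorphM]]].
Qed.

Lemma ring_map_comp A B C (u : A -> B) (v : B -> C) :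
  ring_map u -> ring_map v -> ring_map (v \o u).
Proof.
move=> [u0 [u1 [uD uM]]] [v0 [v1 [vD vM]]].
by split; [|split; [|split]] => *; rewrite /= ?u0 ?v0 ?u1 ?v1 ?uD ?vD ?uM ?vM.
Qed.

Lemma ring_map_iter A (u : A -> A) k : ring_map u -> ring_map (iter k u).
Proof.
by move=> Hu; elim: k => [|k IH]; [split; [|split] | exact: ring_map_comp IH Hu].
Qed.

Lemma ring_mapX A B (u : A -> B) x k : ring_map u -> u (x ^+ k) = u x ^+ k.
Proof.
case=> _ [u1 [_ uM]]; elim: k => [|k IHk]; first by rewrite !expr0.
by rewrite !exprS uM IHk.
Qed.

Lemma ext_ideal_comp A B C (u : A -> B) (v : B -> C) (a : A -> Prop) :
  ring_map v -> ideal_sub (ext_ideal v (ext_ideal u a)) (ext_ideal (v \o u) a).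
Proof.
move=> [v0 [_ [vD vM]]]; apply: ext_ideal_min; first exact: ext_ideal_ideal.
have HE := ext_ideal_ideal (v \o u) a.
apply: (ext_ideal_min (J := fun b => ext_ideal (v \o u) a (v b))) => [|x Hx].
  split; first by rewrite v0; apply: ideal0.
  split => [x y Hx Hy|r x Hx]; rewrite ?vD ?vM.
    exact: idealD HE Hx Hy.
  exact: idealMl HE Hx.
exact: (@ext_ideal_mem _ _ (v \o u) a x Hx).
Qed.

End Extension.

Section Multiplicativity.
Variables (B C : comNzRingType) (n : B -> Prop) (v : B -> C).
Hypotheses (Hloc : noetherian_local n) (Hv : ring_map v).

Lemma ext_ideal_socle (I : B -> Prop) x : (forall t, n t -> I (t * x)) ->
  forall r, ext_ideal v n r -> ext_ideal v I (r * v x).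
Proof.
have [v0 [_ [vD vM]]] := Hv => Hx.
have HE := ext_ideal_ideal v I.
apply: (ext_ideal_min (J := fun r => ext_ideal v I (r * v x))) => [|t Ht].
  split; first by rewrite mul0r; apply: ideal0.
  split => [y z Hy Hz|r y Hy]; first by rewrite mulrDl; apply: idealD HE Hy Hz.
  by rewrite -mulrA; apply: idealMl HE Hy.
by rewrite -vM; apply: ext_ideal_mem; apply: Hx.
Qed.

Lemma ext_ideal_adjoin (I : B -> Prop) x :
  ideal_sub (ext_ideal v (adjoin I x)) (adjoin (ext_ideal v I) (v x)).
Proof.
have [_ [_ [vD vM]]] := Hv.
apply: ext_ideal_min; first exact/adjoin_ideal/ext_ideal_ideal.
move=> _ [i [r [Hi ->]]]; rewrite vD vM; exists (v i), (v r); split => //.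
exact: ext_ideal_mem.
Qed.

(* Induction on ℓ(B/I): peel off a socle element x of I, so that
   ℓ(B/(I + Bx)) < ℓ(B/I) while (v(I)C + v(x)C)/v(I)C is a quotient of C/v(n)C. *)
Lemma length_le_extend c2 : length_le (ext_ideal v n) whole c2 ->
  forall c (I : B -> Prop), is_ideal I -> length_le I whole c ->
  length_le (ext_ideal v I) whole (c * c2).
Proof.
have [_ [v1 _]] := Hv => Hc2 c; elim: c => [|c IH] I HI HbI;
  have [I1|I1] := classic (I 1).
- by apply: length_le_unit; rewrite -v1; apply: ext_ideal_mem.
- case: (length_le_strict HI (@whole_ideal B) (fun _ _ => Logic.I) _ HbI).
  by move=> Hsub; apply/I1/Hsub.
- by apply: length_le_unit; rewrite -v1; apply: ext_ideal_mem.
have [x [Ix Hsoc]] := socle_element Hloc HI I1 HbI.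
have Hb' : length_le (adjoin I x) whole c.
  apply: length_le_shrink_bottom HbI => //; first exact: adjoin_sub.
  by move=> Hsub; apply/Ix/Hsub/adjoin_mem.
have HE := ext_ideal_ideal v I.
rewrite mulSn; apply: (@length_le_add _ _ (adjoin (ext_ideal v I) (v x))).
- exact: adjoin_ideal.
- exact: whole_ideal.
- exact: adjoin_sub.
- by [].
- exact: length_le_adjoin HE (ext_ideal_socle Hsoc) Hc2.
- apply: (length_le_mono _ _ _ (IH _ (adjoin_ideal x HI) Hb')) => //.
  exact: ext_ideal_adjoin.
Qed.

End Multiplicativity.

Lemma length_le_ext_comp (A B C : comNzRingType) (a : A -> Prop) (n : B -> Prop)
    (u : A -> B) (v : B -> C) c1 c2 :
  noetherian_local n -> ring_map v -> length_le (ext_ideal u a) whole c1 ->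
  length_le (ext_ideal v n) whole c2 ->
  length_le (ext_ideal (v \o u) a) whole (c1 * c2).
Proof.
move=> Hn Hv Hc1 Hc2.
apply: (length_le_mono _ _ _ (length_le_extend Hn Hv Hc2 (ext_ideal_ideal u a) Hc1)) => //.
exact: ext_ideal_comp.
Qed.

Section Composition.
Implicit Types A B C : comNzRingType.

Lemma radical_ideal B (I : B -> Prop) : is_ideal I -> is_ideal (radical I).
Proof.
move=> HI; split; first by exists 1%N; rewrite expr1; apply: ideal0.
split=> [x y [a Ha] [b Hb]|r x [k Hk]]; last by exists k; rewrite exprMn; apply: idealMl.
exists (a + b)%N; rewrite exprDn; elim/big_ind: _ => [|u w|[i Hi] _ /=].
- exact: ideal0.
- exact: idealD.
rewrite -mulr_natr; apply: idealMr => //; case: (leqP b i) => Hbi.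
  by apply: idealMl => //; apply: idealX_ge Hb Hbi.
by apply: idealMr => //; apply: idealX_ge Ha _ => //; lia.
Qed.

(* In a local ring, an ideal I ⊆ m with m ⊆ rad I is m-primary: outside m
   everything is a unit. *)
Lemma primary_of_radical B (m I : B -> Prop) :
  noetherian_local m -> is_ideal I -> ideal_sub I m -> ideal_sub m (radical I) ->
  primary_to I m.
Proof.
move=> Hl HI HIm HmI; split; first by split => // /HIm; apply: local_proper.
split=> [x y Hxy|y]; last by split=> [[k /HIm /(local_pow Hl)]|/HmI].
have [/HmI|/(local_unit Hl)[z Hz]] := classic (m y); [by right | left].
by rewrite -(mulr1 x) -Hz mulrCA; apply: idealMl.
Qed.

Lemma finite_length_comp A B C (m : A -> Prop) (n : B -> Prop) (p : C -> Prop)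
    (u : A -> B) (v : B -> C) :
  noetherian_local p -> ring_map v ->
  finite_length_map u m n -> finite_length_map v n p -> finite_length_map (v \o u) m p.
Proof.
move=> Hp Hv [Hul [_ [_ Hur]]] [Hvl [_ [_ Hvr]]].
have Hloc : local_map (v \o u) m p by move=> x /Hul/Hvl.
split => //; set I := ext_ideal (v \o u) m.
have HI : is_ideal I := ext_ideal_ideal _ _.
apply: primary_of_radical => //; first exact: ext_ideal_min (local_ideal Hp) Hloc.
have Hvn : ideal_sub (ext_ideal v n) (radical I).
  apply: ext_ideal_min; first exact: radical_ideal.
  move=> s /Hur[k Hk]; exists k.
  by rewrite -ring_mapX //; apply: (ext_ideal_comp Hv); apply: ext_ideal_mem.
move=> t /Hvr[k /Hvn[j Hj]]; by exists (k * j)%N; rewrite exprM.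
Qed.

Lemma finite_length_bounded A B (m : A -> Prop) (n : B -> Prop) (u : A -> B) :
  noetherian_local n -> finite_length_map u m n ->
  exists c, length_le (ext_ideal u m) whole c.
Proof.
move=> Hn [_ [_ [_ Hr]]]; have [xs [Hxs Hgen]] := local_fg Hn.
apply: (length_finite (xs := xs) Hn Hxs (ext_ideal_ideal u m)).
  by move=> t /Hr[e He]; exists e.
move=> x /Hgen; apply: adjoin_seq_mono => _ ->; apply: ideal0; exact: ext_ideal_ideal.
Qed.

End Composition.

Section Iterates.
Variables (A : comNzRingType) (m : A -> Prop) (psi : A -> A).
Hypotheses (Hm : noetherian_local m) (Hpsi : ring_map psi)
  (Hfl : finite_length_map psi m m).

Lemma iter_length_bounded k : exists c, length_le (ext_ideal (iter k psi) m) whole c.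
Proof.
have [c Hc] := finite_length_bounded Hm Hfl.
elim: k => [|k [ck Hck]].
  exists 1%N; apply: (length_le_residue Hm) => x Hx.
  exact: (@ext_ideal_mem _ _ (iter 0 psi) m x Hx).
by exists (ck * c)%N; apply: length_le_ext_comp Hm Hpsi Hck Hc.
Qed.

Lemma map_length_iter_bound k :
  length_le (ext_ideal (iter k psi) m) whole (map_length (iter k psi) m).
Proof.
have [c Hc] := iter_length_bounded k.
exact: colength_bound (ext_ideal_ideal _ _) Hc.
Qed.

Lemma map_length_iter_pos k : (0 < map_length (iter k psi) m)%N.
Proof.
have [c Hc] := iter_length_bounded k.
have Hloc : local_map (iter k psi) m m.
  by elim: k {c Hc} => [|k IHk] x Hx //=; apply/(proj1 Hfl)/IHk.
exact: colength_pos (ext_ideal_ideal _ _) (ext_ideal_proper Hm Hloc) Hc.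
Qed.

Lemma map_length_iter_submul p q :
  (map_length (iter (p + q) psi) m <= map_length (iter p psi) m * map_length (iter q psi) m)%N.
Proof.
have -> : iter (p + q) psi = iter p psi \o iter q psi.
  by apply: functional_extensionality => x; rewrite iterD.
rewrite mulnC; apply: colength_le (ext_ideal_ideal _ _) _.
exact: length_le_ext_comp Hm (ring_map_iter p Hpsi)
  (map_length_iter_bound (k := q)) (map_length_iter_bound (k := p)).
Qed.

End Iterates.

Lemma iter_comp_swap (A B : Type) (f : A -> B) (g : B -> A) k :
  iter k.+1 (g \o f) = g \o (iter k (f \o g) \o f).
Proof.
apply: functional_extensionality => x; elim: k => // k IH.
change (g (f (iter k.+1 (g \o f) x)) = g (f (g (iter k (f \o g) (f x))))).
by rewrite IH.
Qed.

(* Cross estimate: (g∘f)^(k+1) = g∘(f∘g)^k∘f, hence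
   λ((g∘f)^(k+1)) ≤ λ(f) · λ((f∘g)^k) · λ(g). *)
Lemma map_length_cross (A B : comNzRingType) (m : A -> Prop) (n : B -> Prop)
    (f : A -> B) (g : B -> A) cf cg k :
  noetherian_local n -> ring_map f -> ring_map g ->
  length_le (ext_ideal f m) whole cf -> length_le (ext_ideal g n) whole cg ->
  length_le (ext_ideal (iter k (f \o g)) n) whole (map_length (iter k (f \o g)) n) ->
  (map_length (iter k.+1 (g \o f)) m <= cf * map_length (iter k (f \o g)) n * cg)%N.
Proof.
move=> Hn Hf Hg Hcf Hcg Hk.
have Hfgf := length_le_ext_comp Hn (ring_map_iter k (ring_map_comp Hg Hf)) Hcf Hk.
rewrite iter_comp_swap /map_length.
exact: colength_le (ext_ideal_ideal _ _) (length_le_ext_comp Hn Hg Hfgf Hcg).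
Qed.

Local Open Scope R_scope.

Definition rate (a : nat -> R) (n : nat) : R := a n.+1 / INR n.+1.

Section Fekete.
Variable a : nat -> R.
Hypotheses (a_ge0 : forall n, 0 <= a n)
  (a_subadd : forall p q, a (p + q)%N <= a p + a q).

Lemma subadd_mul s P r : a (s * P + r)%N <= INR s * a P + a r.
Proof.
elim: s => [|s IH]; first by rewrite mul0n add0n /=; lra.
rewrite mulSn -addnA S_INR; have := a_subadd P (s * P + r); lra.
Qed.

Lemma subadd_lin r : a r <= a 0%N + INR r * a 1%N.
Proof.
elim: r => [|r IH]; first by rewrite /=; lra.
rewrite -addn1 plus_INR /=; have := a_subadd r 1; lra.
Qed.

Lemma rate_ge0 n : 0 <= rate a n.
Proof. by apply: Rle_mult_inv_pos => //; apply: lt_0_INR; lia. Qed.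

(* Splitting n+1 = s(Q+1) + r with r ≤ Q:  a(n+1) ≤ (n+1)·rate(Q) + K_Q. *)
Lemma rate_upper Q n :
  rate a n <= rate a Q + (a 0%N + INR Q.+1 * a 1%N) / INR n.+1.
Proof.
set P := Q.+1; set K := a 0%N + INR P * a 1%N.
have HP : 0 < INR P by apply: lt_0_INR; lia.
have Hn : 0 < INR n.+1 by apply: lt_0_INR; lia.
have Edm := divn_eq n.+1 P; set s := (n.+1 %/ P)%N in Edm; set r := (n.+1 %% P)%N in Edm.
have HrP : (r < P)%N by apply: ltn_pmod.
have Hr : a r <= K.
  apply: Rle_trans (subadd_lin r) _; rewrite /K.
  have : INR r <= INR P by apply: le_INR; lia.
  have := a_ge0 1; nra.
have HsP : INR s * INR P <= INR n.+1 by rewrite -mult_INR; apply: le_INR; lia.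
have Hq : a P = rate a Q * INR P by rewrite /rate -/P; field; lra.
have Han : a n.+1 <= INR n.+1 * rate a Q + K.
  rewrite {1}Edm; apply: Rle_trans (subadd_mul s P r) _; rewrite Hq.
  have := Rmult_le_compat_r _ _ _ (rate_ge0 Q) HsP; lra.
have -> : rate a Q + K / INR n.+1 = (INR n.+1 * rate a Q + K) / INR n.+1.
  by field; lra.
by apply: Rmult_le_compat_r Han; apply/Rlt_le/Rinv_0_lt_compat.
Qed.

Lemma fekete : exists h, Un_cv (rate a) h /\ forall n, h <= rate a n.
Proof.
pose E x := exists n, x = - rate a n.
have Ebound : bound E by exists 0 => _ [n ->]; have := rate_ge0 n; lra.
have [l [Hub Hlub]] := completeness E Ebound (ex_intro _ _ (ex_intro _ 0%N erefl)).
have Hinf n : - l <= rate a n by have := Hub _ (ex_intro _ n erefl); lra.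
exists (- l); split => // eps Heps.
have [Q HQ] : exists Q, rate a Q < - l + eps / 2.
  apply: NNPP => Hno; suff : l <= l - eps / 2 by lra.
  apply: Hlub => _ [n ->]; suff : ~ rate a n < - l + eps / 2 by lra.
  by move=> Hlt; apply: Hno; exists n.
set K := a 0%N + INR Q.+1 * a 1%N.
have HK : 0 <= K by have := a_ge0 0; have := a_ge0 1; have := pos_INR Q.+1; rewrite /K; nra.
have [N HN] := INR_unbounded (2 * K / eps).
exists N => n Hn; rewrite /R_dist.
have HnN : INR N <= INR n.+1 by apply: le_INR; lia.
have HKn : K / INR n.+1 < eps / 2.
  have Hpos : 0 < INR n.+1 by apply: lt_0_INR; lia.
  apply: (Rmult_lt_reg_r (INR n.+1)) => //; rewrite /Rdiv Rmult_assoc Rinv_l; last lra.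
  have : 2 * K < eps * INR n.+1.
    have : 2 * K / eps * eps = 2 * K by field; lra.
    nra.
  lra.
have := rate_upper Q n; rewrite -/K => Hup.
by have Hl := Hinf n; rewrite Rabs_right; lra.
Qed.

End Fekete.

Lemma cv_const (c : R) : Un_cv (fun _ => c) c.
Proof. by move=> e He; exists 0%N => n _; rewrite /R_dist Rminus_diag Rabs_R0. Qed.

Lemma cv_div_INR (c : R) : Un_cv (fun n => c / INR n.+2) 0.
Proof.
rewrite -(Rmult_0_r c); apply: CV_mult (cv_const c) _; apply: cv_infty_cv_0 => M.
have [N HN] := INR_unbounded M; exists N => n Hn.
have : INR N <= INR n.+2 by apply: le_INR; lia.
  lra.
Qed.

Lemma rate_inf_le_lim (a b : nat -> R) (C h1 h2 : R) : 0 <= C ->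
  (forall n, 0 <= b n) -> (forall k, a k.+1 <= C + b k) ->
  (forall n, h1 <= rate a n) -> Un_cv (rate b) h2 -> h1 <= h2.
Proof.
move=> HC Hb Hab Hinf Hcv.
have Hcmp n : h1 <= C / INR n.+2 + rate b n.
  have Hn1 : 0 < INR n.+1 by apply: lt_0_INR; lia.
  have Hn2 : INR n.+1 < INR n.+2 by apply: lt_INR; lia.
  apply: Rle_trans (Hinf n.+1) _; rewrite /rate.
  have Hb' : b n.+1 / INR n.+2 <= b n.+1 / INR n.+1.
    apply: Rmult_le_compat_l (Hb _) _; apply: Rinv_le_contravar; lra.
  have : a n.+2 / INR n.+2 <= (C + b n.+1) / INR n.+2.
    by apply: Rmult_le_compat_r (Hab _); apply/Rlt_le/Rinv_0_lt_compat; lra.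
  rewrite /Rdiv Rmult_plus_distr_r -/(Rdiv C _) -/(Rdiv (b _) _); lra.
rewrite -(Rplus_0_l h2); apply: (Rle_cv_lim Hcmp (cv_const h1)).
exact: CV_plus (cv_div_INR C) Hcv.
Qed.

Lemma ln_INR_le (x y : nat) : (0 < x)%N -> (x <= y)%N -> ln (INR x) <= ln (INR y).
Proof.
move=> Hx; rewrite leq_eqVlt => /orP[/eqP -> | Hxy]; first exact: Rle_refl.
by apply/Rlt_le/ln_increasing; [apply: lt_0_INR | apply: lt_INR]; lia.
Qed.

Lemma ln_INR_ge0 (x : nat) : (0 < x)%N -> 0 <= ln (INR x).
Proof. by move=> Hx; rewrite -ln_1; apply: (@ln_INR_le 1 x). Qed.

Lemma ln_INR_mul (x y : nat) : (0 < x)%N -> (0 < y)%N ->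
  ln (INR (x * y)%N) = ln (INR x) + ln (INR y).
Proof. by move=> Hx Hy; rewrite mult_INR; apply: ln_mult; apply: lt_0_INR; lia. Qed.

Lemma same_growth_rate (LR LS : nat -> nat) (C : nat) :
  (forall k, 0 < LR k)%N -> (forall k, 0 < LS k)%N -> (0 < C)%N ->
  (forall p q, LR (p + q) <= LR p * LR q)%N -> (forall p q, LS (p + q) <= LS p * LS q)%N ->
  (forall k, LR k.+1 <= C * LS k)%N -> (forall k, LS k.+1 <= C * LR k)%N ->
  exists h, Un_cv (rate (fun k => ln (INR (LR k)))) h /\
            Un_cv (rate (fun k => ln (INR (LS k)))) h.
Proof.
move=> HR HS HC subR subS crossR crossS.
pose a k := ln (INR (LR k)); pose b k := ln (INR (LS k)).
have Ha0 k : 0 <= a k by apply: ln_INR_ge0.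
have Hb0 k : 0 <= b k by apply: ln_INR_ge0.
have HC0 : 0 <= ln (INR C) by apply: ln_INR_ge0.
have subadd (L : nat -> nat) :
    (forall k, 0 < L k)%N -> (forall p q, L (p + q) <= L p * L q)%N ->
    forall p q, ln (INR (L (p + q)%N)) <= ln (INR (L p)) + ln (INR (L q)).
  by move=> HL subL p q; rewrite -ln_INR_mul ?HL //; apply: ln_INR_le (HL _) (subL p q).
have cross (L L' : nat -> nat) : (forall k, 0 < L k)%N -> (forall k, 0 < L' k)%N ->
    (forall k, L k.+1 <= C * L' k)%N ->
    forall k, ln (INR (L k.+1)) <= ln (INR C) + ln (INR (L' k)).
  move=> HL HL' crossL k; rewrite -ln_INR_mul ?HL' //.
  exact: ln_INR_le (HL k.+1) (crossL k).
have [h1 [Hc1 Hi1]] := fekete Ha0 (subadd _ HR subR).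
have [h2 [Hc2 Hi2]] := fekete Hb0 (subadd _ HS subS).
have h1_le_h2 := rate_inf_le_lim HC0 Hb0 (cross _ _ HR HS crossR) Hi1 Hc2.
have h2_le_h1 := rate_inf_le_lim HC0 Ha0 (cross _ _ HS HR crossS) Hi2 Hc1.
by exists h1; split; last by have -> : h1 = h2 by lra.
Qed.

Local Close Scope R_scope.

Theorem mainTheorem12 (A B : comNzRingType) (m : A -> Prop) (n : B -> Prop)
  (f : {rmorphism A -> B}) (g : {rmorphism B -> A}) :
  noetherian_local m -> noetherian_local n ->
  finite_length_map f m n -> finite_length_map g n m ->
  finite_length_map (g \o f) m m /\ finite_length_map (f \o g) n n /\
  exists h : R, has_alg_entropy (g \o f) m h /\ has_alg_entropy (f \o g) n h.
Proof.
move=> Hm Hn Hf Hg.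
have [Rf Rg] := (rmorphism_ring_map f, rmorphism_ring_map g).
have [Rgf Rfg] := (ring_map_comp Rf Rg, ring_map_comp Rg Rf).
have Hgf := finite_length_comp Hm Rg Hf Hg.
have Hfg := finite_length_comp Hn Rf Hg Hf.
split => //; split => //.
have [cf Hcf] := finite_length_bounded Hn Hf.
have [cg Hcg] := finite_length_bounded Hm Hg.
have Lf := colength_bound (ext_ideal_ideal _ _) Hcf.
have Lg := colength_bound (ext_ideal_ideal _ _) Hcg.
have Pf := colength_pos (ext_ideal_ideal _ _) (ext_ideal_proper Hn (proj1 Hf)) Hcf.
have Pg := colength_pos (ext_ideal_ideal _ _) (ext_ideal_proper Hm (proj1 Hg)) Hcg.
apply: (same_growth_rate (LR := fun k => map_length (iter k (g \o f)) m)
  (LS := fun k => map_length (iter k (f \o g)) n)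
  (C := (colength (ext_ideal f m) * colength (ext_ideal g n))%N)).
- exact: map_length_iter_pos Hm Rgf Hgf.
- exact: map_length_iter_pos Hn Rfg Hfg.
- by rewrite muln_gt0 Pf Pg.
- exact: map_length_iter_submul Hm Rgf Hgf.
- exact: map_length_iter_submul Hn Rfg Hfg.
- move=> k; have Bk := map_length_iter_bound (k := k) Hn Rfg Hfg.
  by rewrite mulnAC; apply: map_length_cross Hn Rf Rg Lf Lg Bk.
- move=> k; have Bk := map_length_iter_bound (k := k) Hm Rgf Hgf.
  by rewrite (mulnC (colength _)) mulnAC; apply: map_length_cross Hm Rg Rf Lg Lf Bk.
Qed.
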